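(* Assume the setting below and one of: (g) general missingness ($M_i(1),M_i(0)\in\{0,1\}$ arbitrary constants, possibly depending on the potential outcomes); (mp) $M_i(1)\ge M_i(0)$ for all $i$; (mn) $M_i(1)\le M_i(0)$ for all $i$. For $\boldsymbol\delta\in\mathbb R^n$ define $\tilde{\boldsymbol Y}^{\square}_{\boldsymbol Z,\boldsymbol\delta}(0)\in\overline{\mathbb R}^n$, $\square\in\{\texttt g,\texttt{mp},\texttt{mn}\}$, coordinatewise by: for $Z_i=1,M_i=1$ all three equal $Y_i-\delta_i$; for $Z_i=0,M_i=1$ all three equal $Y_i$; for $Z_i=1,M_i=0$ they equal $-\infty$ ($\texttt g$), $+\infty$ ($\texttt{mp}$), $-\infty$ ($\texttt{mn}$); for $Z_i=0,M_i=0$ they equal $+\infty$ ($\texttt g$), $+\infty$ ($\texttt{mp}$), $-\infty$ ($\texttt{mn}$). Let $\mathcal J=\{i:Z_i=M_i=1\}$, $n_{11}=|\mathcal J|$, and write $\mathcal J=\{j_1,\dots,j_{n_{11}}\}$ with $\psi_{j_{l+1},j_l}(Y_{j_{l+1}},Y_{j_l})=1$ for $1\le l<n_{11}$; for $1\le L\le n_{11}$ let $\mathcal J_L=\{j_{n_{11}-L+1},\dots,j_{n_{11}}\}$ and $\mathcal J_0=\emptyset$. Fix $\kappa>0$. For $1\le k\le n_1$, $c\in\mathbb R$ define $\boldsymbol\xi_{k,c}\in\mathbb R^n$ by $\xi_{k,c,i}=\max_{l:Z_l=M_l=1}Y_l-\min_{l:Z_l=0,M_l=1}Y_l+\kappa$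 if $i\in\mathcal J_{\min\{n_1-k,n_{11}\}}$ and $\xi_{k,c,i}=c$ otherwise. Then, with $\square$ the label of the assumed mechanism, $$\tilde p^{\square}_{\texttt t,k,c}:=G_{\mathrm R,\phi}\big(t_{\mathrm R,\phi}(\boldsymbol Z,\tilde{\boldsymbol Y}^{\square}_{\boldsymbol Z,\boldsymbol\xi_{k,c}}(0))\big)$$ is a valid p-value for $H^{\texttt t}_{k,c}:\sum_{i=1}^nZ_i\mathbf 1\{\tau_i>c\}\le n_1-k$ (equivalently, the $k$-th smallest individual effect among treated units is $\le c$), in the sense that $\mathbb P\big(\tilde p^{\square}_{\texttt t,k,c}\le\alpha\text{ and }H^{\texttt t}_{k,c}\text{ holds}\big)\le\alpha$ for all $\alpha\in(0,1)$.
   Context: There are $n$ units. Unit $i$ has fixed potential outcomes $Y_i^\star(0),Y_i^\star(1)\in\mathbb R$ and fixed potential missingness indicators $M_i(0),M_i(1)\in\{0,1\}$; $\tau_i=Y_i^\star(1)-Y_i^\star(0)$. The assignment $\boldsymbol Z\in\{0,1\}^n$ is drawn from a completely randomized experiment (CRE): for fixed positive integers $n_1,n_0$, $n_1+n_0=n$, $\boldsymbol Z$ is uniform over vectors in $\{0,1\}^n$ with exactly $n_1$ ones, independently of all potential outcomes and missingness indicators; probabilities are over $\boldsymbol Z$. Observed missingness $M_i=Z_iM_i(1)+(1-Z_i)M_i(0)$; the realized outcome $Z_iY_i^\star(1)+(1-Z_i)Y_i^\star(0)$ is observed, and denoted $Y_i$, only when $M_i=1$. The null $H^{\texttt t}_{k,c}$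 is an event depending on $\boldsymbol Z$. $\overline{\mathbb R}=\mathbb R\cup\{\pm\infty\}$; $\psi_{i,j}(y,y')=\mathbf 1\{y>y'\}+\mathbf 1\{y=y'\}\mathbf 1\{i\ge j\}$; $\mathrm{rank}_i(\boldsymbol y)=\sum_j\psi_{i,j}(y_i,y_j)$. $\phi$ is a fixed nondecreasing real function on the nonnegative integers. $t_{\mathrm R,\phi}(\boldsymbol z,\boldsymbol y)$ is either $\sum_i z_i\phi(\mathrm{rank}_i(\boldsymbol y))$ or $\sum_i z_i\phi\big(\sum_j(1-z_j)\psi_{i,j}(y_i,y_j)\big)$; the result holds for either. $G_{\mathrm R,\phi}(c)=\mathbb P(t_{\mathrm R,\phi}(\boldsymbol A,\boldsymbol y_0)\ge c)$ with $\boldsymbol A$ from the CRE and $\boldsymbol y_0\in\mathbb R^n$ any fixed vector (independent of $\boldsymbol y_0$). *)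

From HB Require Import structures.
From mathcomp Require Import all_boot all_order all_algebra.
From mathcomp Require Import reals constructive_ereal.
Set Implicit Arguments. Unset Strict Implicit. Unset Printing Implicit Defensive.
Import Order.TTheory GRing.Theory Num.Theory.
Local Open Scope ring_scope.

Section Defs.
Variable R : realType.
Variable n : nat.

Definition assign := {ffun 'I_n -> bool}.

(* support of the completely randomized experiment: exactly n1 treated *)
Definition CRE (n1 : nat) : {set assign} := [set z : assign | #|[set i | z i]| == n1].

Definition PrCRE (n1 : nat) (E : pred assign) : R :=
  (#|[set z in CRE n1 | E z]|%:R) / (#|CRE n1|%:R).

Definition psi (i j : 'I_n) (y y' : \bar R) : nat :=
  ((y' < y)%E + ((y == y') && (j <= i)%N))%N.

Definition rank (y : 'I_n -> \bar R) (i : 'I_n) : nat := (\sum_(j < n) psi i j (y i) (y j))%N.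

Inductive stat_kind := RankAll | RankCtrl.

Definition tR (s : stat_kind) (phi : nat -> R) (z : assign) (y : 'I_n -> \bar R) : R :=
  match s with
  | RankAll => \sum_(i < n | z i) phi (rank y i)
  | RankCtrl => \sum_(i < n | z i) phi (\sum_(j < n | ~~ z j) psi i j (y i) (y j))%N
  end.

Definition GR (n1 : nat) (s : stat_kind) (phi : nat -> R) (yref : 'I_n -> R) (c : R) : R :=
  PrCRE n1 (fun a => c <= tR s phi a (fun i => (yref i)%:E)).

Inductive mech := Mg | Mmp | Mmn.

Definition mech_assump (m : mech) (M1 M0 : 'I_n -> bool) : Prop :=
  match m with
  | Mg => True
  | Mmp => forall i, (M0 i <= M1 i)%O
  | Mmn => forall i, (M1 i <= M0 i)%O
  end.

Variables (y1 y0 : 'I_n -> R) (M1 M0 : 'I_n -> bool).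

Definition Mobs (z : assign) (i : 'I_n) : bool := if z i then M1 i else M0 i.
Definition Yobs (z : assign) (i : 'I_n) : R := if z i then y1 i else y0 i.

Definition Ytilde (m : mech) (z : assign) (delta : 'I_n -> R) (i : 'I_n) : \bar R :=
  if Mobs z i then
    (if z i then (Yobs z i - delta i)%:E else (Yobs z i)%:E)
  else match m, z i with
       | Mg, true => -oo%E
       | Mg, false => +oo%E
       | Mmp, _ => +oo%E
       | Mmn, _ => -oo%E
       end.

(* maximum / minimum of f over a set S (convention 0 when S is empty) *)
Definition maxS (S : {set 'I_n}) (f : 'I_n -> R) : R :=
  if [pick i in S] is Some i0 then \big[Num.max/f i0]_(i in S) f i else 0.
Definition minS (S : {set 'I_n}) (f : 'I_n -> R) : R :=
  if [pick i in S] is Some i0 then \big[Num.min/f i0]_(i in S) f i else 0.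

Definition Jset (z : assign) : {set 'I_n} := [set i | z i && Mobs z i].
Definition Cobs (z : assign) : {set 'I_n} := [set i | ~~ z i && Mobs z i].

(* position of i in the enumeration j_1,...,j_{n11} of J, which is
   increasing for the order psi: j_l has position l *)
Definition posJ (z : assign) (i : 'I_n) : nat :=
  (\sum_(j in Jset z) psi i j (Yobs z i)%:E (Yobs z j)%:E)%N.

Definition JL (z : assign) (L : nat) : {set 'I_n} :=
  [set i in Jset z | (#|Jset z| - L < posJ z i)%N].

Definition xi (n1 k : nat) (c kappa : R) (z : assign) (i : 'I_n) : R :=
  if i \in JL z (minn (n1 - k) #|Jset z|) then
    maxS (Jset z) (Yobs z) - minS (Cobs z) (Yobs z) + kappa
  else c.

Definition Hnull (n1 k : nat) (c : R) (z : assign) : bool :=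
  (#|[set i | z i && (c < y1 i - y0 i)%R]| <= n1 - k)%N.

End Defs.

From HB Require Import structures.
From mathcomp Require Import all_boot all_order all_algebra.
From mathcomp Require Import reals constructive_ereal.
From mathcomp Require Import zify lra.
Import Order.TTheory GRing.Theory Num.Theory.
Local Open Scope ring_scope.
Set Implicit Arguments. Unset Strict Implicit. Unset Printing Implicit Defensive.

(* Let Y0oracle be y0 with the entries missing under control replaced by +oo
   under (mp) and by -oo under (mn); it does not depend on Z. Compare Ytilde
   with Y0oracle unit by unit, ties being broken by the index. Under
   H^t_{k,c}, for every v at least as many treated units have fewer than v
   controls below them under Ytilde as under Y0oracle: treated units with
   effect <= c sit lower under Ytilde, and the at most n1 - k units with
   effect > c are compensated by J_L, which the shift xi pushes below every
   observed control. Abel summation against the nondecreasing phi then gives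
   t(Z, Ytilde) <= t(Z, Y0oracle). Finally G does not depend on its reference
   vector (tie-broken ranks only relabel the units), so the p-value is at
   least G(t(Z, Y0oracle)), the randomization p-value of a fixed statistic,
   which is valid. *)

Lemma card_le_of_inj_range (T : finType) (S : {set T}) (f : T -> nat) lo hi :
  {in S &, injective f} -> {in S, forall i, lo <= f i < hi}%N ->
  (#|S| <= hi - lo)%N.
Proof.
move=> finj hf; rewrite cardE -(size_map f) -(size_iota lo (hi - lo)).
apply: uniq_leq_size.
  by rewrite map_inj_in_uniq ?enum_uniq // => x y; rewrite !mem_enum; apply: finj.
move=> x /mapP[i]; rewrite mem_enum => /hf /andP[lo_i i_hi] ->.
by rewrite mem_iota lo_i subnKC // (leq_trans lo_i (ltnW i_hi)).
Qed.

Lemma card_split_threshold (T : finType) (P : pred T) (f : T -> nat) t :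
  (#|[set i | P i & (t < f i)%N]| + #|[set i | P i & (f i <= t)%N]|)%N = #|[set i | P i]|.
Proof.
rewrite -(cardsID [set i | (t < f i)%N] [set i | P i]); congr (_ + _)%N.
  by apply: eq_card => i; rewrite !inE.
by apply: eq_card => i; rewrite !inE -leqNgt andbC.
Qed.

Section LexiPair.
Variables (d1 d2 : Order.disp_t) (T1 : orderType d1) (T2 : orderType d2).
Implicit Types (a b : T1) (i j : T2).

Lemma lexi_lel a b i : (a <= b)%O -> ((a, i) <= (b, i) :> (T1 *l T2)%type)%O.
Proof. by move=> ab; rewrite lexi_pair ab lexx implybT. Qed.

Lemma lexi_ltl a b i j : (a < b)%O -> ((a, i) <= (b, j) :> (T1 *l T2)%type)%O.
Proof. by move=> ab; rewrite lexi_pair (ltW ab) leNgt ab. Qed.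

Lemma lexi_gtF a b i j : (b < a)%O -> ((a, i) <= (b, j) :> (T1 *l T2)%type)%O = false.
Proof. by move=> ba; rewrite lexi_pair leNgt ba. Qed.

End LexiPair.

Lemma lexi_subr (R : realType) n (x x' e : R) (i j : 'I_n) :
  (((x - e)%:E, i) <= ((x' - e)%:E, j) :> (\bar R *l 'I_n)%type)%O =
  ((x%:E, i) <= (x'%:E, j) :> (\bar R *l 'I_n)%type)%O.
Proof. by rewrite !lexi_pair !lee_fin !lerD2r. Qed.

Section TieBrokenRank.
Variables (R : realType) (n : nat) (y : 'I_n -> \bar R).
Implicit Types (P : pred 'I_n) (i j : 'I_n).

Definition tkey i : (\bar R *l 'I_n)%type := (y i, i).

Lemma psiE i j : psi i j (y i) (y j) = (tkey j <= tkey i)%O.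
Proof. by rewrite /psi /tkey lexi_pair; case: ltgtP. Qed.

Lemma tkey_inj : injective tkey.
Proof. by move=> i j [_ ->]. Qed.

Definition rank_in P i : nat := #|[set j | P j & (tkey j <= tkey i)%O]|.

Lemma sum_psiE P i : (\sum_(j < n | P j) psi i j (y i) (y j))%N = rank_in P i.
Proof.
rewrite /rank_in -sum1dep_card big_mkcondr /=; apply: eq_bigr => j _.
by rewrite psiE; case: (_ <= _)%O.
Qed.

Lemma rank_in_le P i j : (tkey i <= tkey j)%O -> (rank_in P i <= rank_in P j)%N.
Proof.
move=> ij; apply: subset_leq_card; apply/subsetP => l.
by rewrite !inE => /andP[-> li]; exact: le_trans li ij.
Qed.

Lemma rank_in_lt P i j : P j -> (tkey i < tkey j)%O -> (rank_in P i < rank_in P j)%N.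
Proof.
move=> Pj ij; apply: proper_card; apply/properP; split.
  apply/subsetP => l; rewrite !inE => /andP[-> li].
  exact: le_trans li (ltW ij).
exists j; rewrite !inE Pj /= -?ltNge //; exact: le_refl.
Qed.

Lemma leq_rank_in P i j : P i ->
  (rank_in P i <= rank_in P j)%N = (tkey i <= tkey j)%O.
Proof.
move=> Pi; apply/idP/idP; last exact: rank_in_le.
by apply: contraLR; rewrite -ltnNge -ltNge; exact: rank_in_lt Pi.
Qed.

Lemma rank_in_inj P : {in P &, injective (rank_in P)}.
Proof.
move=> i j Pi Pj eij; apply: tkey_inj; apply: le_anti.
by rewrite -(@leq_rank_in P i j Pi) -(@leq_rank_in P j i Pj) eij leqnn.
Qed.

Lemma rank_in_gt0 P i : P i -> (0 < rank_in P i)%N.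
Proof. by move=> Pi; apply/card_gt0P; exists i; rewrite inE Pi lexx. Qed.

Lemma rank_in_le_card P i : (rank_in P i <= #|[set j | P j]|)%N.
Proof. by apply: subset_leq_card; apply/subsetP => l; rewrite !inE => /andP[]. Qed.

Lemma rank_in_le_n P i : (rank_in P i <= n)%N.
Proof. by apply: leq_trans (max_card _) _; rewrite card_ord. Qed.

Lemma card_rank_in_le P t : (#|[set i | P i & (rank_in P i <= t)%N]| <= t)%N.
Proof.
rewrite -[leqRHS]subn0 -subSS; apply: (@card_le_of_inj_range _ _ (rank_in P)) => [i j|i].
  by rewrite !inE => /andP[Pi _] /andP[Pj _]; exact: rank_in_inj.
by rewrite inE => /andP[Pi ti]; rewrite rank_in_gt0.
Qed.

Lemma card_rank_in_gt P t :
  (#|[set i | P i & (t < rank_in P i)%N]| <= #|[set i | P i]| - t)%N.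
Proof.
rewrite -subSS; apply: (@card_le_of_inj_range _ _ (rank_in P)) => [i j|i].
  by rewrite !inE => /andP[Pi _] /andP[Pj _]; exact: rank_in_inj.
by rewrite inE => /andP[Pi ti]; rewrite ti ltnS rank_in_le_card.
Qed.

Lemma card_le_rank_in_max P (S : {set 'I_n}) j : {in S, forall i, P i} ->
  {in S, forall i, rank_in P i <= rank_in P j}%N -> (#|S| <= rank_in P j)%N.
Proof.
move=> SP Sj; apply: leq_trans (card_rank_in_le P (rank_in P j)).
by apply: subset_leq_card; apply/subsetP => i iS; rewrite inE SP ?Sj.
Qed.

End TieBrokenRank.

Lemma rank_in_le_of_below (R : realType) n (y y' : 'I_n -> \bar R) (P : pred 'I_n) i x :
  (forall l, P l -> (tkey y l <= tkey y i)%O -> (tkey y' l <= tkey y' x)%O) ->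
  (rank_in y P i <= rank_in y' P x)%N.
Proof.
move=> below; apply: subset_leq_card; apply/subsetP => l.
by rewrite !inE => /andP[Pl li]; rewrite Pl below.
Qed.

(* For disjoint [P] and [Q], [rank_in y Q i + rank_in y P i] is the rank of
   [i] in the union of [P] and [Q]; the two lemmas below say that
   [cnt_joint r] is the largest [l] with [l <= cnt_shift l r], which makes it
   monotone in the counts of [rank_in y Q] alone. *)
Section JointRankCount.
Variables (R : realType) (n : nat) (y : 'I_n -> \bar R) (P Q : pred 'I_n).

Definition cnt_joint r := #|[set i | P i & (rank_in y Q i + rank_in y P i < r)%N]|.
Definition cnt_shift l r := #|[set i | P i & (rank_in y Q i + l < r)%N]|.

Lemma cnt_shiftE l r : cnt_shift l r = #|[set i | P i & (rank_in y Q i < r - l)%N]|.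
Proof. by apply: eq_card => i; rewrite !inE ltn_subRL addnC. Qed.

Lemma cnt_joint_le_shift r : (cnt_joint r <= cnt_shift (cnt_joint r) r)%N.
Proof.
rewrite /cnt_shift /cnt_joint; set S := [set i | _ & _].
have [-> | /set0Pn[j0 j0S]] := eqVneq S set0; first by rewrite cards0.
have [j jS jmax] := arg_maxnP (rank_in y P) j0S.
have SP : {in S, forall i, P i} by move=> i; rewrite inE => /andP[].
have Sj : (#|S| <= rank_in y P j)%N by apply: card_le_rank_in_max.
apply: subset_leq_card; apply/subsetP => i iS; rewrite inE SP //=.
have ij : (tkey y i <= tkey y j)%O by rewrite -(leq_rank_in _ _ (SP i iS)); apply: jmax.
move: (jS : j \in S); rewrite inE => /andP[_]; apply: leq_ltn_trans.
by rewrite leq_add ?rank_in_le.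
Qed.

Lemma le_cnt_joint l r : (l <= cnt_shift l r)%N -> (l <= cnt_joint r)%N.
Proof.
rewrite /cnt_shift /cnt_joint; set T := [set i | _ & _] => lT.
have [-> // | l_gt0] := posnP l.
have /set0Pn[j0 j0T] : T != set0 by rewrite -card_gt0 (leq_trans l_gt0 lT).
have [j jT jmax] := arg_maxnP (rank_in y P) j0T.
have TP : {in T, forall i, P i} by move=> i; rewrite inE => /andP[].
have lj : (l <= rank_in y P j)%N.
  by apply: leq_trans lT (card_le_rank_in_max TP _).
have lP : (l <= #|[set i | P i]|)%N := leq_trans lj (rank_in_le_card _ _ _).
have prefix : (l <= #|[set i | P i & (rank_in y P i <= l)%N]|)%N.
  have := card_split_threshold P (rank_in y P) l.
  have := card_rank_in_gt y P l; lia.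
apply: leq_trans prefix (subset_leq_card _); apply/subsetP => i.
rewrite !inE => /andP[Pi il]; rewrite Pi /=.
have ij : (tkey y i <= tkey y j)%O by rewrite -(leq_rank_in _ _ Pi) (leq_trans il).
move: (jT : j \in T); rewrite inE => /andP[_]; apply: leq_ltn_trans.
by rewrite leq_add ?rank_in_le.
Qed.

End JointRankCount.

Lemma cnt_joint_le (R : realType) n (y y' : 'I_n -> \bar R) (P Q : pred 'I_n) :
  (forall v, #|[set i | P i & (rank_in y' Q i < v)%N]|
          <= #|[set i | P i & (rank_in y Q i < v)%N]|)%N ->
  forall r, (cnt_joint y' P Q r <= cnt_joint y P Q r)%N.
Proof.
move=> dom r; apply: le_cnt_joint; apply: leq_trans (cnt_joint_le_shift y' P Q r) _.
by rewrite !cnt_shiftE dom.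
Qed.

Lemma tail_count_le (T : finType) (P : pred T) (f f' : T -> nat) :
  (forall v, #|[set i | P i & (f' i < v)%N]| <= #|[set i | P i & (f i < v)%N]|)%N ->
  forall r, (#|[set i | P i & (r < f i)%N]| <= #|[set i | P i & (r < f' i)%N]|)%N.
Proof.
move=> dom r; have := dom r.+1.
have split g := card_split_threshold P g r.
have ltS g : #|[set i | P i & (g i < r.+1)%N]| = #|[set i | P i & (g i <= r)%N]|.
  by apply: eq_card => i; rewrite !inE ltnS.
by rewrite !ltS; have := split f; have := split f'; lia.
Qed.

Section LayerCake.
Variables (R : realType) (phi : nat -> R).
Hypothesis phi_homo : {homo phi : a b / (a <= b)%N >-> a <= b}.

Lemma layer_cake N t : (t <= N)%N ->
  phi t = phi 0 + \sum_(r < N) (r < t)%N%:R * (phi r.+1 - phi r).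
Proof.
move=> tN; apply/eqP; rewrite addrC -subr_eq eq_sym; apply/eqP.
rewrite -(big_mkord xpredT (fun r => (r < t)%N%:R * (phi r.+1 - phi r))).
rewrite (@big_cat_nat _ _ _ t 0 N) //= [X in _ + X]big1_seq ?addr0; last first.
  by move=> r; rewrite mem_index_iota => /and3P[_ tler _]; rewrite ltnNge tler mul0r.
rewrite -telescope_sumr //; apply: eq_big_nat => r /andP[_ ->]; exact: mul1r.
Qed.

Lemma sum_layer_cake (T : finType) (P : pred T) (s : T -> nat) N :
  (forall i, P i -> s i <= N)%N ->
  \sum_(i | P i) phi (s i) = \sum_(i | P i) phi 0 +
    \sum_(r < N) #|[set i | P i & (r < s i)%N]|%:R * (phi r.+1 - phi r).
Proof.
move=> sN; rewrite (eq_bigr _ (fun i Pi => layer_cake (sN i Pi))) big_split /=.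
congr (_ + _); rewrite exchange_big /=; apply: eq_bigr => r _.
rewrite -big_distrl /= -sum1dep_card natr_sum big_mkcondr /=.
by congr (_ * _); apply: eq_bigr => i _; case: (r < s i)%N.
Qed.

Lemma ler_sum_of_tail_count (T : finType) (P : pred T) (s s' : T -> nat) N :
  (forall i, P i -> s i <= N)%N -> (forall i, P i -> s' i <= N)%N ->
  (forall r, #|[set i | P i & (r < s i)%N]| <= #|[set i | P i & (r < s' i)%N]|)%N ->
  \sum_(i | P i) phi (s i) <= \sum_(i | P i) phi (s' i).
Proof.
move=> sN s'N tails; rewrite (sum_layer_cake sN) (sum_layer_cake s'N) lerD2l.
apply: ler_sum => r _; apply: ler_wpM2r; first by rewrite subr_ge0 phi_homo.
by rewrite ler_nat.
Qed.

End LayerCake.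

Lemma rank_in_predT_split (R : realType) n (y : 'I_n -> \bar R) (P : pred 'I_n) i :
  rank_in y xpredT i = (rank_in y [pred j | ~~ P j] i + rank_in y P i)%N.
Proof.
rewrite /rank_in -(cardsID [set j | P j]) addnC.
by congr (_ + _)%N; apply: eq_card => j; rewrite !inE andbC.
Qed.

Section RankStatistic.
Variables (R : realType) (n : nat) (phi : nat -> R).
Hypothesis phi_homo : {homo phi : a b / (a <= b)%N >-> a <= b}.
Variable z : assign n.

Let ctrl := [pred j | ~~ z j].

Lemma tRE s (y : 'I_n -> \bar R) : tR s phi z y = match s with
  | RankAll => \sum_(i | z i) phi (rank_in y ctrl i + rank_in y z i)
  | RankCtrl => \sum_(i | z i) phi (rank_in y ctrl i) end.
Proof.
case: s => /=; apply: eq_bigr => i _; congr (phi _); last exact: sum_psiE.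
by rewrite /rank (sum_psiE y xpredT) (rank_in_predT_split _ z).
Qed.

Lemma tR_le_of_ctrl_dominance s (yt yf : 'I_n -> \bar R) :
  (forall v, #|[set i | z i & (rank_in yf ctrl i < v)%N]|
          <= #|[set i | z i & (rank_in yt ctrl i < v)%N]|)%N ->
  tR s phi z yt <= tR s phi z yf.
Proof.
move=> dom; rewrite !tRE; case: s.
  apply: (ler_sum_of_tail_count phi_homo (N := n + n)) => [i _|i _|].
  - by rewrite leq_add ?rank_in_le_n.
  - by rewrite leq_add ?rank_in_le_n.
  by apply: tail_count_le; exact: cnt_joint_le.
apply: (ler_sum_of_tail_count phi_homo (N := n)) => [i _|i _|].
- exact: rank_in_le_n.
- exact: rank_in_le_n.
exact: tail_count_le.
Qed.

End RankStatistic.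

Section Relabel.
Variables (R : realType) (n : nat).
Implicit Types (y : 'I_n -> \bar R) (z : assign n).

Lemma rank_pred_lt y i : ((rank_in y xpredT i).-1 < n)%N.
Proof. by rewrite prednK ?rank_in_gt0 ?rank_in_le_n. Qed.

Definition rank_ord y i : 'I_n := Ordinal (rank_pred_lt y i).

Lemma rank_ord_inj y : injective (rank_ord y).
Proof.
move=> i j /(congr1 val) /= /(congr1 S); rewrite !prednK ?rank_in_gt0 //.
exact: rank_in_inj.
Qed.

Variables (y y' : 'I_n -> \bar R).

(* Sends the unit of tie-broken rank [r] under [y] to the unit of rank [r]
   under [y']. *)
Definition relabel i := invF (@rank_ord_inj y') (rank_ord y i).

Lemma relabel_inj : injective relabel.
Proof. by move=> i j /(can_inj (f_invF _)) /rank_ord_inj. Qed.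

Lemma rank_relabel i : rank_in y' xpredT (relabel i) = rank_in y xpredT i.
Proof.
have /(congr1 (S \o val)) /= := f_invF (@rank_ord_inj y') (rank_ord y i).
by rewrite !prednK ?rank_in_gt0.
Qed.

Lemma psi_relabel i j :
  psi (relabel i) (relabel j) (y' (relabel i)) (y' (relabel j)) = psi i j (y i) (y j).
Proof. by rewrite !psiE -!(leq_rank_in _ _ (isT : xpredT _)) !rank_relabel. Qed.

Definition relabel_assign z : assign n := [ffun i => z (invF relabel_inj i)].

Lemma relabel_assignE z i : relabel_assign z (relabel i) = z i.
Proof. by rewrite ffunE invF_f. Qed.

Lemma relabel_assign_inj : injective relabel_assign.
Proof.
move=> z1 z2 e; apply/ffunP => i.
by rewrite -(relabel_assignE z1) -(relabel_assignE z2) e.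
Qed.

Lemma card_relabel_assign z : #|[set i | relabel_assign z i]| = #|[set i | z i]|.
Proof.
have -> : [set i | relabel_assign z i] = invF relabel_inj @^-1: [set i | z i].
  by apply/setP => i; rewrite !inE ffunE.
by rewrite card_preimset //; exact: can_inj (f_invF relabel_inj).
Qed.

Lemma tR_relabel s phi z : tR s phi (relabel_assign z) y' = tR s phi z y.
Proof.
case: s => /=; rewrite (reindex_inj relabel_inj) /=.
  apply: eq_big => [i|i _]; first exact: relabel_assignE.
  congr (phi _); rewrite /rank (reindex_inj relabel_inj).
  by apply: eq_bigr => j _; rewrite psi_relabel.
apply: eq_big => [i|i _]; first exact: relabel_assignE.
congr (phi _); rewrite (reindex_inj relabel_inj).
by apply: eq_big => [j|j _]; rewrite ?relabel_assignE ?psi_relabel.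
Qed.

End Relabel.

Section RandomizationTest.
Variables (R : realType) (n n1 : nat).

Lemma PrCRE_le (E1 E2 : pred (assign n)) :
  (forall z, z \in CRE n n1 -> E1 z -> E2 z) -> PrCRE R n1 E1 <= PrCRE R n1 E2.
Proof.
move=> E12; rewrite /PrCRE ler_wpM2r ?invr_ge0 // ler_nat.
apply: subset_leq_card; apply/subsetP => z /setIdP[zC E1z].
by rewrite inE zC E12.
Qed.

Lemma GR_ref_free s phi (yref : 'I_n -> R) (y : 'I_n -> \bar R) c :
  GR n1 s phi yref c = PrCRE R n1 (fun a => c <= tR s phi a y).
Proof.
rewrite /GR /PrCRE; congr (_%:R / _).
rewrite -(card_preimset _ (@relabel_assign_inj R n y (fun i => (yref i)%:E))).
by apply: eq_card => z; rewrite !inE card_relabel_assign tR_relabel.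
Qed.

Lemma GR_nonincreasing s phi (yref : 'I_n -> R) c1 c2 :
  c1 <= c2 -> GR n1 s phi yref c2 <= GR n1 s phi yref c1.
Proof. by move=> c12; apply: PrCRE_le => z _; exact: le_trans. Qed.

Lemma randomization_pvalue_valid (T : assign n -> R) alpha : 0 <= alpha ->
  PrCRE R n1 (fun z => PrCRE R n1 (fun a => T z <= T a) <= alpha) <= alpha.
Proof.
move=> alpha_ge0; rewrite {1}/PrCRE; set Z := [set z in CRE n n1 | _].
have [-> | /set0Pn[z0 z0Z]] := eqVneq Z set0; first by rewrite cards0 mul0r.
have [zm zmZ zm_min] := arg_minP T z0Z.
(* [zm] minimises [T] over the rejecting assignments, which thus all lie in its tail. *)
apply: le_trans (_ : PrCRE R n1 (fun a => T zm <= T a) <= alpha); last first.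
  by move: (zmZ : zm \in Z); rewrite inE => /andP[].
rewrite /PrCRE ler_wpM2r ?invr_ge0 // ler_nat; apply: subset_leq_card.
apply/subsetP => z zZ; rewrite inE zm_min // andbT.
by move: zZ; rewrite inE => /andP[].
Qed.

End RandomizationTest.

Lemma maxS_ge (R : realType) n (S : {set 'I_n}) (f : 'I_n -> R) i :
  i \in S -> f i <= maxS S f.
Proof.
rewrite /maxS => iS; case: pickP => [i0 _|none]; last by move: (none i); rewrite iS.
exact: le_bigmax_cond.
Qed.

Lemma minS_le (R : realType) n (S : {set 'I_n}) (f : 'I_n -> R) i :
  i \in S -> minS S f <= f i.
Proof.
rewrite /minS => iS; case: pickP => [i0 _|none]; last by move: (none i); rewrite iS.
exact: bigmin_le_cond.
Qed.

Section Mechanism.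
Variables (R : realType) (n n1 k : nat) (c kappa : R) (y1 y0 : 'I_n -> R)
  (M1 M0 : 'I_n -> bool) (m : mech).
Hypothesis mech_m : mech_assump m M1 M0.
Hypothesis kappa_gt0 : 0 < kappa.

Definition Y0oracle i : \bar R :=
  if M0 i then (y0 i)%:E else
  match m with Mg => (y0 i)%:E | Mmp => +oo%E | Mmn => -oo%E end.

Variable z : assign n.

Local Notation J := (Jset M1 M0 z).
Local Notation Y := (Yobs y1 y0 z).
Local Notation L := (minn (n1 - k) #|J|).
Local Notation JLz := (JL y1 y0 M1 M0 z L).
Local Notation xiz := (xi y1 y0 M1 M0 n1 k c kappa z).
Local Notation Yt := (Ytilde y1 y0 M1 M0 m z xiz).
Local Notation ctrl := [pred j | ~~ z j].
Local Notation rankJ := (rank_in (fun i => (Y i)%:E) (fun i => i \in J)).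

Lemma mem_Jset i : (i \in J) = z i && M1 i.
Proof. by rewrite inE /Mobs; case: (z i). Qed.

Lemma Yobs_J i : i \in J -> Y i = y1 i.
Proof. by rewrite mem_Jset /Yobs => /andP[-> _]. Qed.

Lemma mem_JL i : (i \in JLz) = (i \in J) && (#|J| - L < rankJ i)%N.
Proof. by rewrite inE /posJ (sum_psiE (fun i => (Y i)%:E)). Qed.

Lemma JL_subset i : i \in JLz -> i \in J.
Proof. by rewrite mem_JL => /andP[]. Qed.

Lemma Ytilde_J i : i \in J -> Yt i = (y1 i - xiz i)%:E.
Proof. by rewrite mem_Jset => /andP[zi M1i]; rewrite /Ytilde /Mobs /Yobs zi M1i. Qed.

Lemma xi_JL i : i \in JLz -> xiz i = maxS J Y - minS (Cobs M1 M0 z) Y + kappa.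
Proof. by rewrite /xi => ->. Qed.

Lemma xi_notJL i : i \notin JLz -> xiz i = c.
Proof. by rewrite /xi => /negbTE ->. Qed.

Lemma Y0oracle_le_ctrl l : ~~ z l -> (Y0oracle l <= Yt l)%E.
Proof.
move=> zl; rewrite /Ytilde /Mobs /Yobs /Y0oracle (negbTE zl).
by case: (M0 l); case: m => //=; rewrite ?leey ?leNye.
Qed.

Lemma y0_le_Y0oracle j : j \in J -> ((y0 j)%:E <= Y0oracle j)%E.
Proof.
rewrite mem_Jset /Y0oracle => /andP[_ M1j].
case M0j: (M0 j) => //; move: mech_m; case: m => //= [_|mn]; first exact: leey.
by move: (mn j); rewrite M1j M0j.
Qed.

Lemma Ytilde_le_Y0oracle i : z i -> i \notin JLz ->
  (i \in J -> ~~ (c < y1 i - y0 i)) -> (Yt i <= Y0oracle i)%E.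
Proof.
move=> zi iJL tau_le.
case M1i: (M1 i).
  have iJ : i \in J by rewrite mem_Jset zi M1i.
  rewrite Ytilde_J // xi_notJL //; apply: le_trans (y0_le_Y0oracle iJ).
  by rewrite lee_fin lerBlDr addrC -lerBlDr leNgt tau_le.
rewrite /Ytilde /Mobs zi M1i /Y0oracle.
move: mech_m; case: m => /= [_|mp|_].
- by case: (M0 i); rewrite leNye.
- by move: (mp i); rewrite M1i; case: (M0 i).
- by case: (M0 i); rewrite leNye.
Qed.

Lemma Ytilde_JL_below j x l : j \in JLz -> x \in J -> ~~ z l ->
  (tkey Yt l <= tkey Yt j)%O -> (tkey Y0oracle l <= tkey Y0oracle x)%O.
Proof.
move=> jJL xJ zl; have jJ := JL_subset jJL.
have Ytj_lt a : minS (Cobs M1 M0 z) Y <= a -> (Yt j < a%:E)%E.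
  move=> min_a; rewrite Ytilde_J // xi_JL // lte_fin.
  have := maxS_ge Y jJ; rewrite Yobs_J //.
  by move: min_a kappa_gt0; move: (maxS _ _) (minS _ _) => mx mn *; lra.
have Yt_l : Yt l = if M0 l then (y0 l)%:E else
    match m with Mg | Mmp => +oo%E | Mmn => -oo%E end.
  by rewrite /Ytilde /Mobs /Yobs (negbTE zl); case: m.
rewrite /tkey Yt_l; case M0l: (M0 l).
  have lC : l \in Cobs M1 M0 z by rewrite inE /Mobs (negbTE zl) M0l.
  have := minS_le Y lC; rewrite /Yobs (negbTE zl) => /Ytj_lt ltj.
  by rewrite lexi_gtF.
have Ytj_fin : (Yt j < +oo)%E := lt_trans (Ytj_lt _ (lexx _)) (ltry _).
move: mech_m Ytj_fin; rewrite /Y0oracle M0l; case: m => [_|_|mn] Ytj_fin;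
  try by rewrite lexi_gtF.
move: xJ; rewrite mem_Jset => /andP[_ M1x] _.
have -> : M0 x by move: (mn x); rewrite M1x; case: (M0 x).
by rewrite lexi_ltl ?ltNyr.
Qed.

Lemma Ytilde_notJL_below i j l : i \in J -> i \notin JLz -> j \in JLz ->
  ~~ (c < y1 j - y0 j) -> ~~ z l ->
  (tkey Yt l <= tkey Yt i)%O -> (tkey Y0oracle l <= tkey Y0oracle j)%O.
Proof.
move=> iJ iJL jJL tau_j zl li; have jJ := JL_subset jJL.
have ij : (rankJ i <= rankJ j)%N.
  by move: iJL jJL; rewrite !mem_JL iJ jJ /= -leqNgt => /leq_ltn_trans h /h /ltnW.
move: ij; rewrite leq_rank_in // /tkey !Yobs_J // -(lexi_subr _ _ c) => ij.
apply: le_trans (lexi_lel _ (Y0oracle_le_ctrl zl)) _; apply: le_trans li _.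
rewrite /tkey Ytilde_J // xi_notJL //; apply: le_trans ij _; apply: lexi_lel.
apply: le_trans (y0_le_Y0oracle jJ); rewrite lee_fin.
by rewrite lerBlDr addrC -lerBlDr leNgt.
Qed.

Lemma ctrl_rank_Ytilde_le i : z i ->
  (i \in J -> i \notin JLz -> ~~ (c < y1 i - y0 i)) ->
  (rank_in Yt ctrl i <= rank_in Y0oracle ctrl i)%N.
Proof.
move=> zi tau_i; apply: rank_in_le_of_below => l zl li.
have [iJL | iJL] := boolP (i \in JLz); first exact: Ytilde_JL_below (JL_subset iJL) zl li.
apply: le_trans (lexi_lel _ (Y0oracle_le_ctrl zl)) _; apply: le_trans li _.
by apply: lexi_lel; apply: Ytilde_le_Y0oracle => // iJ; exact: tau_i.
Qed.

Lemma L_le_card_JL : (L <= #|JLz|)%N.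
Proof.
have -> : #|JLz| = #|[set i | i \in J & (#|J| - L < rankJ i)%N]|.
  by apply: eq_card => i; rewrite mem_JL inE.
have cardJ : #|[set i | i \in J]| = #|J| by apply: eq_card => i; rewrite inE.
have := card_split_threshold (fun i => i \in J) rankJ (#|J| - L).
have := card_rank_in_le (fun i => (Y i)%:E) (fun i => i \in J) (#|J| - L).
rewrite cardJ; have := geq_minr (n1 - k) #|J|.
set a := #|[set i in J | (_ < _)%N]|; set b := #|[set i in J | (_ <= _)%N]|.
by clearbody a b; lia.
Qed.

Lemma L_eq_of_notJL x : x \in J -> x \notin JLz -> L = (n1 - k)%N.
Proof.
move=> xJ; rewrite mem_JL xJ /= -leqNgt => x_le.
have := @rank_in_gt0 _ _ (fun i => (Y i)%:E) _ _ xJ.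
by move: x_le; set r := rank_in _ _ x; clearbody r; lia.
Qed.

Section Dominance.
Variable v : nat.

Local Notation F := [set i | z i & (rank_in Y0oracle ctrl i < v)%N].
Local Notation S := [set i | z i & (rank_in Yt ctrl i < v)%N].
Local Notation X := [set i | [&& i \in J, i \notin JLz & c < y1 i - y0 i]].

Lemma F_notX_subset i : i \in F -> i \notin X -> i \in S.
Proof.
rewrite [i \in F]in_set => /andP[zi iv] iX; rewrite in_set zi (leq_ltn_trans _ iv) //.
apply: ctrl_rank_Ytilde_le => // iJ iJL; apply: contra iX => tau_i.
by rewrite in_set iJ iJL tau_i.
Qed.

Lemma JL_subset_S x : x \in F -> x \in X -> JLz \subset S.
Proof.
rewrite [x \in F]in_set [x \in X]in_set => /andP[_ xv] /and3P[xJ _ _].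
apply/subsetP => j jJL.
have zj : z j by move: (JL_subset jJL); rewrite mem_Jset => /andP[].
rewrite in_set zj (leq_ltn_trans _ xv) //.
by apply: rank_in_le_of_below => l zl; exact: Ytilde_JL_below.
Qed.

Lemma F_subset_S j : j \in JLz -> j \in F -> ~~ (c < y1 j - y0 j) -> F \subset S.
Proof.
move=> jJL jF tau_j; apply/subsetP => i iF.
have [iX | ] := boolP (i \in X); last exact: F_notX_subset.
move: iX iF jF; rewrite [i \in X]in_set [i \in F]in_set [j \in F]in_set.
move=> /and3P[iJ iJL _] /andP[zi _] /andP[_ jv].
rewrite in_set zi (leq_ltn_trans _ jv) //; apply: rank_in_le_of_below => l zl.
exact: Ytilde_notJL_below.
Qed.

(* [F :\: X :\: J_L] and [J_L] are disjoint parts of [S], and the rest of [F]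
   has effect [> c]. *)
Lemma card_F_le x : x \in F -> x \in X ->
  {in JLz, forall j, j \in F -> c < y1 j - y0 j} ->
  (#|F| + (n1 - k) <= #|S| + #|[set i | z i & (c < y1 i - y0 i)%R]|)%N.
Proof.
move=> xF xX tau_JL; set B := [set i | z i & (c < y1 i - y0 i)%R]; set A := F :\: X :\: JLz.
have F_AB : F \subset A :|: B.
  apply/subsetP => i iF; rewrite in_setU !in_setD iF andbT.
  have zi : z i by move: iF; rewrite inE => /andP[].
  have [iX | iX] := boolP (i \in X).
    by move: iX; rewrite [i \in B]inE zi inE => /and3P[_ _ ->]; rewrite orbT.
  have [iJL | //] := boolP (i \in JLz).
  by rewrite [i \in B]inE zi tau_JL ?orbT.
have AJL_S : A :|: JLz \subset S.
  apply/subsetP => i; rewrite in_setU => /orP[|]; last exact/subsetP/(JL_subset_S xF xX).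
  by rewrite !in_setD => /andP[_ /andP[iX iF]]; exact: F_notX_subset.
have AJL0 : A :&: JLz = set0.
  by apply/setP => i; rewrite in_setI in_setD andbC andbA andbN in_set0.
have F_le : (#|F| <= #|A| + #|B|)%N.
  exact: leq_trans (subset_leq_card F_AB) (leq_card_setU A B).
have AJL_le : (#|A| + #|JLz| <= #|S|)%N.
  by rewrite -cardsUI AJL0 cards0 addn0 subset_leq_card.
have L_le := L_le_card_JL.
rewrite {1}(@L_eq_of_notJL x) in L_le; try by move: xX; rewrite in_set => /and3P[].
apply: leq_trans (leq_add F_le L_le) _.
by rewrite addnAC leq_add2r.
Qed.

End Dominance.

Lemma ctrl_count_dominance : Hnull y1 y0 n1 k c z -> forall v,
  (#|[set i | z i & (rank_in Y0oracle ctrl i < v)%N]|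
     <= #|[set i | z i & (rank_in Yt ctrl i < v)%N]|)%N.
Proof.
rewrite /Hnull => H0 v.
set F := [set i | z i & (rank_in Y0oracle ctrl i < v)%N].
set X := [set i | [&& i \in J, i \notin JLz & c < y1 i - y0 i]].
have [FX0 | /set0Pn[x /setIP[xF xX]]] := eqVneq (F :&: X) set0.
  apply/subset_leq_card/subsetP => i iF; apply: F_notX_subset => //.
  by apply/negP => iX; move/setP/(_ i): FX0; rewrite in_setI iF iX in_set0.
have [/exists_inP[j jJL /andP[jF tau_j]] | /exists_inPn tau_JL] :=
  boolP [exists j in JLz, (j \in F) && ~~ (c < y1 j - y0 j)].
  exact/subset_leq_card/(F_subset_S jJL jF tau_j).
have tau_JL' : {in JLz, forall j, j \in F -> c < y1 j - y0 j}.
  by move=> j jJL jF; move: (tau_JL j jJL); rewrite jF negbK.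
rewrite -(leq_add2r (n1 - k)); apply: leq_trans (card_F_le xF xX tau_JL') _.
by rewrite leq_add2l.
Qed.

End Mechanism.

Theorem theorem6 (R : realType) (n1 n0 n : nat)
  (hn1 : (0 < n1)%N) (hn0 : (0 < n0)%N) (hn : (n1 + n0)%N = n)
  (y1 y0 : 'I_n -> R) (M1 M0 : 'I_n -> bool)
  (m : mech) (hm : mech_assump m M1 M0)
  (s : stat_kind) (phi : nat -> R) (hphi : {homo phi : a b / (a <= b)%N >-> a <= b})
  (yref : 'I_n -> R)
  (kappa : R) (hkappa : 0 < kappa)
  (k : nat) (hk1 : (1 <= k)%N) (hk2 : (k <= n1)%N) (c : R)
  (alpha : R) (halpha0 : 0 < alpha) (halpha1 : alpha < 1) :
  PrCRE R n1 (fun z =>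
    (GR n1 s phi yref
       (tR s phi z (Ytilde y1 y0 M1 M0 m z (xi y1 y0 M1 M0 n1 k c kappa z))) <= alpha)
    && Hnull y1 y0 n1 k c z) <= alpha.
Proof.
set Yf := Y0oracle y0 M0 m.
apply: le_trans (randomization_pvalue_valid n1 (fun a => tR s phi a Yf) (ltW halpha0)).
apply: PrCRE_le => z _ /andP[p_le H0].
rewrite -(GR_ref_free n1 s phi yref Yf); apply: le_trans p_le; apply: GR_nonincreasing.
exact/(tR_le_of_ctrl_dominance hphi)/(ctrl_count_dominance hm hkappa H0).
Qed.
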